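(* If $X$ is a metric space with $\operatorname{trasdim}X<\infty$, then $\operatorname{trasdim}X<\omega_1$, where $\omega_1$ is the first uncountable ordinal.
   Context: A family $\mathcal A$ of subsets of a metric space is uniformly bounded if there is $C>0$ with $\operatorname{diam}A\le C$ for all $A\in\mathcal A$; it is $r$-disjoint if $d(A_1,A_2)\ge r$ for all distinct $A_1,A_2\in\mathcal A$. For a set $L$, $\mathrm{Fin}\,L$ is the collection of finite nonempty subsets of $L$. For $M\subset \mathrm{Fin}\,L$ and $\sigma\in\{\emptyset\}\cup\mathrm{Fin}\,L$, $M^\sigma=\{\tau\in\mathrm{Fin}\,L:\sigma\cup\tau\in M,\ \sigma\cap\tau=\emptyset\}$, and $M^a=M^{\{a\}}$. The ordinal $\operatorname{Ord}M$: $\operatorname{Ord}M=0$ iff $M=\emptyset$; $\operatorname{Ord}M\le\alpha$ iff $\operatorname{Ord}M^a<\alpha$ for every $a\in L$; $\operatorname{Ord}M=\alpha$ iff $\operatorname{Ord}M\le\alpha$ and not $\operatorname{Ord}M<\alpha$; $\operatorname{Ord}M=\infty$ iff $\operatorname{Ord} M\le\alpha$ for no ordinal $\alpha$ ($\infty$ is larger than every ordinal). For a metric space $(X,d)$, $A(X,d)$ is the set of $\sigma\in\mathrm{Fin}\,\mathbb N$ such that there do NOT exist uniformly bounded families $\mathcal V_i$, $i\in\sigma$, with $\bigcup_{i\in\sigma}\mathcal V_i$ covering $X$ and each $\mathcal V_i$ being $i$-disjoint. Define $\operatorname{trasdim}X=\operatorname{Ord}A(X,d)$, except $\operatorname{trasdim}X=-1$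 iff $X$ is bounded. *)

From Stdlib Require Import Reals.
From mathcomp Require Import all_boot finmap.
Set Implicit Arguments. Unset Strict Implicit. Unset Printing Implicit Defensive.
Local Open Scope fset_scope.

Definition is_metric (X : Type) (d : X -> X -> R) : Prop :=
  (forall x y, Rle 0 (d x y)) /\
  (forall x y, d x y = R0 <-> x = y) /\
  (forall x y, d x y = d y x) /\
  (forall x y z, Rle (d x z) (Rplus (d x y) (d y z))).

Definition bounded_space (X : Type) (d : X -> X -> R) : Prop :=
  exists C : R, forall x y, Rle (d x y) C.

Definition family (X : Type) := (X -> Prop) -> Prop.

(* diam A <= C  iff all pairwise distances in A are <= C *)
Definition uniformly_bounded (X : Type) (d : X -> X -> R) (V : family X) : Prop :=
  exists C : R, Rlt R0 C /\
    forall A, V A -> forall x y, A x -> A y -> Rle (d x y) C.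

(* d(A1,A2) = inf of distances >= r, for distinct members A1, A2 *)
Definition r_disjoint (X : Type) (d : X -> X -> R) (r : R) (V : family X) : Prop :=
  forall A1 A2, V A1 -> V A2 -> ~ (forall x, A1 x <-> A2 x) ->
    forall x y, A1 x -> A2 y -> Rle r (d x y).

Definition FinFam := {fset nat} -> Prop.

Definition Msec (M : FinFam) (sigma : {fset nat}) : FinFam :=
  fun tau => tau != fset0 /\ M (sigma `|` tau) /\ [disjoint sigma & tau].

(** An ordinal is represented by an element of a well-ordered type. *)
Record wellorder : Type := WellOrder {
  wo_T :> Type;
  wo_lt : wo_T -> wo_T -> Prop;
  wo_irrefl : forall x, ~ wo_lt x x;
  wo_trans : forall x y z, wo_lt x y -> wo_lt y z -> wo_lt x z;
  wo_total : forall x y, wo_lt x y \/ x = y \/ wo_lt y x;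
  wo_wf : well_founded wo_lt
}.

(* OrdLe M x  <->  Ord M <= x  (where x is an ordinal, given as an element
   of a well-order): Ord M <= x iff M = empty, or for every a, Ord M^a < x,
   i.e. Ord M^a <= y for some y < x. *)
Inductive OrdLe (W : wellorder) (M : FinFam) (x : W) : Prop :=
| OrdLe_empty : (forall s, ~ M s) -> OrdLe M x
| OrdLe_step : (forall a : nat, exists y : W, wo_lt y x /\ OrdLe (Msec M [fset a]) y) ->
               OrdLe M x.

Definition Afam (X : Type) (d : X -> X -> R) : FinFam :=
  fun sigma => sigma != fset0 /\
    ~ (exists V : nat -> family X,
         (forall i, i \in sigma -> uniformly_bounded d (V i) /\ r_disjoint d (INR i) (V i)) /\
         (forall x, exists i, i \in sigma /\ exists A, V i A /\ A x)).

(* trasdim X < oo : X bounded (trasdim = -1) or Ord A(X,d) <= alpha for some ordinal alpha *)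
Definition trasdim_lt_infty (X : Type) (d : X -> X -> R) : Prop :=
  bounded_space d \/ exists (W : wellorder) (x : W), OrdLe (Afam d) x.

(* trasdim X < omega_1 : X bounded or Ord A(X,d) <= alpha for a countable ordinal alpha *)
Definition trasdim_lt_omega1 (X : Type) (d : X -> X -> R) : Prop :=
  bounded_space d \/
  exists (W : wellorder) (x : W),
    (exists f : W -> nat, forall u v, f u = f v -> u = v) /\ OrdLe (Afam d) x.

From Stdlib Require Import Reals.
From mathcomp Require Import all_boot finmap.
From Stdlib Require Import ClassicalEpsilon ProofIrrelevance Inverse_Image.
Local Open Scope fset_scope.

(* Choosing, for each a, one y < x with Ord M^a <= y and
   iterating, the visited points are indexed by finite sequences of naturals,
   so they form a countable well-order in which Ord M is still bounded. *)

Section SubWellorder.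

Variables (W : wellorder) (P : W -> Prop).

Definition sub_lt (u v : {w : W | P w}) : Prop := wo_lt (sval u) (sval v).

Lemma sval_inj : injective (@proj1_sig W P).
Proof.
by case=> [u pu] [v pv] /= E; subst v; rewrite (proof_irrelevance _ pu pv).
Qed.

Lemma sub_lt_irrefl u : ~ sub_lt u u.
Proof. exact: wo_irrefl. Qed.

Lemma sub_lt_trans u v w : sub_lt u v -> sub_lt v w -> sub_lt u w.
Proof. exact: wo_trans. Qed.

Lemma sub_lt_total u v : sub_lt u v \/ u = v \/ sub_lt v u.
Proof.
case: (wo_total (sval u) (sval v)) => [|[/sval_inj|]]; tauto.
Qed.

Lemma sub_lt_wf : well_founded sub_lt.
Proof. exact: wf_inverse_image (@wo_wf W). Qed.

Definition sub_wellorder : wellorder :=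
  WellOrder sub_lt_irrefl sub_lt_trans sub_lt_total sub_lt_wf.

End SubWellorder.

Section CountableWitness.

Variable W : wellorder.

Definition OrdLe_child (M : FinFam) (x : W) (a : nat) : W :=
  epsilon (inhabits x) (fun y => wo_lt y x /\ OrdLe (Msec M [fset a]) y).

Lemma OrdLe_childP {M x a} :
  (exists y, wo_lt y x /\ OrdLe (Msec M [fset a]) y) ->
  wo_lt (OrdLe_child M x a) x /\ OrdLe (Msec M [fset a]) (OrdLe_child M x a).
Proof. exact: epsilon_spec. Qed.

Fixpoint descend (M : FinFam) (x : W) (s : seq nat) : FinFam * W :=
  if s is a :: s' then descend (Msec M [fset a]) (OrdLe_child M x a) s'
  else (M, x).

Lemma descend_rcons M x s a :
  descend M x (rcons s a) =
  (Msec (descend M x s).1 [fset a], OrdLe_child (descend M x s).1 (descend M x s).2 a).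
Proof. by elim: s M x => [|b s IH] M x //=. Qed.

Variables (M0 : FinFam) (x0 : W).

Definition visited (w : W) : Prop := exists s, (descend M0 x0 s).2 = w.

Definition visited_wellorder : wellorder := sub_wellorder W visited.

Lemma visited_countable :
  exists f : visited_wellorder -> nat, injective f.
Proof.
pose path_of (u : visited_wellorder) :=
  sval (constructive_indefinite_description _ (proj2_sig u)).
have path_ofP u : (descend M0 x0 (path_of u)).2 = sval u.
  by rewrite /path_of; case: constructive_indefinite_description.
exists (fun u => choice.pickle (path_of u)) => u v /(pcan_inj choice.pickleK) E.
by apply: sval_inj; rewrite -path_ofP E path_ofP.
Qed.

Lemma OrdLe_visited x s (Hx : (descend M0 x0 s).2 = x) :
  OrdLe (descend M0 x0 s).1 x ->
  OrdLe (W := visited_wellorder) (descend M0 x0 s).1 (exist visited x (ex_intro _ s Hx)).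
Proof.
elim/(well_founded_ind (@wo_wf W)): x s Hx => x IH s Hx.
case=> [M_empty | M_step]; first exact: OrdLe_empty.
apply: OrdLe_step => a.
have [lt_child le_child] := OrdLe_childP (M_step a).
have Hxa : (descend M0 x0 (rcons s a)).2 = OrdLe_child (descend M0 x0 s).1 x a.
  by rewrite descend_rcons /= Hx.
exists (exist visited _ (ex_intro _ (rcons s a) Hxa)); split; first exact: lt_child.
have := IH _ lt_child (rcons s a) Hxa.
by rewrite descend_rcons; apply.
Qed.

End CountableWitness.

Lemma OrdLe_countable (W : wellorder) (M : FinFam) (x : W) :
  OrdLe M x ->
  exists (W' : wellorder) (x' : W'),
    (exists f : W' -> nat, forall u v, f u = f v -> u = v) /\ OrdLe M x'.
Proof.
move=> HM; have Hx : (descend W M x [::]).2 = x by [].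
exists (visited_wellorder W M x), (exist _ x (ex_intro _ [::] Hx)).
by split; [exact: visited_countable | exact: (@OrdLe_visited W M x x [::] Hx HM)].
Qed.

Theorem theorem4 (X : Type) (d : X -> X -> R) (Hd : is_metric d) :
  trasdim_lt_infty d -> trasdim_lt_omega1 d.
Proof.
case=> [X_bounded | [W [x HA]]]; first by left.
by right; exact: OrdLe_countable HA.
Qed.
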